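(* Let $M$ be a $4$-dimensional manifold with local coordinates $(x^1,\dots,x^4)$, $e_i=\partial/\partial x^i$, and Riemannian metric $g$ with components \[(g_{ij})=\begin{pmatrix} A&B&C&B\\ B&A&B&C\\ C&B&A&B\\ B&C&B&A\end{pmatrix},\] $A,B,C$ smooth functions with $A>C>B>0$. Let $P$ be the almost product structure with component matrix having rows $(0,0,1,0),(0,0,0,1),(1,0,0,0),(0,1,0,0)$. Then $(M,g,P)$ belongs to the class $\mathcal{W}_1$ if and only if \[(A+C)(B_4-B_2)=B(A_4-C_2+C_4-A_2),\qquad (A+C)(B_3-B_1)=B(A_3-C_1+C_3-A_1),\] where $A_i=\partial A/\partial x^i$, $B_i=\partial B/\partial x^i$, $C_i=\partial C/\partial x^i$.
   Context: Let $\nabla$ be the Levi-Civita connection of $g$, $F(x,y,z)=g((\nabla_xP)y,z)$, and $\theta(x)=g^{ij}F(e_i,e_j,x)$ with $(g^{ij})$ the inverse of $(g_{ij})$. The manifold $(M,g,P)$ belongs to the class $\mathcal{W}_1$ if for all vector fields $x,y,z$: \[F(x,y,z)=\tfrac14\big[g(x,y)\theta(z)+g(x,z)\theta(y)-g(x,Py)\theta(Pz)-g(x,Pz)\theta(Py)\big].\] *)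

From HB Require Import structures.
From mathcomp Require Import all_boot all_order all_algebra.
From mathcomp Require Import all_classical all_reals all_analysis.
Set Implicit Arguments. Unset Strict Implicit. Unset Printing Implicit Defensive.
Import Order.TTheory GRing.Theory Num.Theory.
Import numFieldNormedType.Exports.
Local Open Scope classical_set_scope.
Local Open Scope ring_scope.

Section Defs.
Variable R : realType.
Notation pt := 'rV[R]_4.

(* coordinate indices: x^1..x^4 are indices 0..3 of 'I_4 *)
Definition i1 : 'I_4 := @Ordinal 4 0 isT.
Definition i2 : 'I_4 := @Ordinal 4 1 isT.
Definition i3 : 'I_4 := @Ordinal 4 2 isT.
Definition i4 : 'I_4 := @Ordinal 4 3 isT.

Definition ev (i : 'I_4) : pt := delta_mx 0 i.

Definition pd (i : 'I_4) (f : pt -> R) : pt -> R := fun x => 'D_(ev i) f x.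

Fixpoint Ck (n : nat) (U : set pt) (f : pt -> R) : Prop :=
  match n with
  | 0 => forall x, U x -> {for x, continuous f}
  | n'.+1 => (forall x, U x -> differentiable f x) /\ (forall i, Ck n' U (pd i f))
  end.
Definition smooth_on (U : set pt) (f : pt -> R) : Prop := forall n, Ck n U f.

(* components g_ij of the metric:
   rows (A B C B), (B A B C), (C B A B), (B C B A) *)
Definition gc (A B C : pt -> R) (i j : 'I_4) : pt -> R :=
  if i == j then A else if odd (i + j) then B else C.
Definition gmx (A B C : pt -> R) (x : pt) : 'M[R]_4 := \matrix_(i, j) gc A B C i j x.
Definition ginv (A B C : pt -> R) (x : pt) : 'M[R]_4 := invmx (gmx A B C x).

Definition Pmx : 'M[R]_4 := \matrix_(i, j) (if (j : nat) == ((i + 2) %% 4)%N then 1 else 0).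

(* Christoffel symbols of the Levi-Civita connection: nabla_{e_i} e_j = sum_k Gam k i j e_k *)
Definition Gam (A B C : pt -> R) (x : pt) (k i j : 'I_4) : R :=
  2^-1 * \sum_(l < 4) ginv A B C x k l *
     (pd i (gc A B C j l) x + pd j (gc A B C i l) x - pd l (gc A B C i j) x).

(* components of (nabla_{e_i} P) e_j = nabla_{e_i}(P e_j) - P (nabla_{e_i} e_j),
   with P e_a = sum_b Pmx a b e_b *)
Definition nablaP (A B C : pt -> R) (x : pt) (i j l : 'I_4) : R :=
  \sum_(a < 4) Pmx j a * Gam A B C x l i a - \sum_(k < 4) Gam A B C x k i j * Pmx k l.

(* F(e_i,e_j,e_k) = g((nabla_{e_i} P) e_j, e_k) *)
Definition Fc (A B C : pt -> R) (x : pt) (i j k : 'I_4) : R :=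
  \sum_(l < 4) nablaP A B C x i j l * gc A B C l k x.

Definition gv (A B C : pt -> R) (x : pt) (u v : pt) : R :=
  \sum_(i < 4) \sum_(j < 4) u 0 i * v 0 j * gc A B C i j x.
Definition Pv (u : pt) : pt := u *m Pmx.
Definition Fv (A B C : pt -> R) (x : pt) (u v w : pt) : R :=
  \sum_(i < 4) \sum_(j < 4) \sum_(k < 4) u 0 i * v 0 j * w 0 k * Fc A B C x i j k.
Definition thetac (A B C : pt -> R) (x : pt) (k : 'I_4) : R :=
  \sum_(i < 4) \sum_(j < 4) ginv A B C x i j * Fc A B C x i j k.
Definition thetav (A B C : pt -> R) (x : pt) (w : pt) : R :=
  \sum_(k < 4) w 0 k * thetac A B C x k.

(* (M,g,P) in class W_1, M = the coordinate domain U *)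
Definition W1 (U : set pt) (A B C : pt -> R) : Prop :=
  forall x, U x -> forall u v w : pt,
    Fv A B C x u v w = 4^-1 * (gv A B C x u v * thetav A B C x w
                              + gv A B C x u w * thetav A B C x v
                              - gv A B C x u (Pv v) * thetav A B C x (Pv w)
                              - gv A B C x u (Pv w) * thetav A B C x (Pv v)).
End Defs.

From HB Require Import structures.
From mathcomp Require Import all_boot all_order all_algebra.
From mathcomp Require Import all_classical all_reals all_analysis.
From mathcomp Require Import ring lra.
Set Implicit Arguments. Unset Strict Implicit. Unset Printing Implicit Defensive.
Import Order.TTheory GRing.Theory Num.Theory.
Import numFieldNormedType.Exports.
Local Open Scope classical_set_scope.
Local Open Scope ring_scope.

(** At a point the computation is finite-dimensional and explicit.  The metric is
   the circulant matrix of (A, B, C, B), whose inverse is again circulant, and P is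
   the g-symmetric permutation e_i |-> e_(i+2).  Writing X_imn for twice the
   Christoffel symbols of the first kind, F_ijk = (X_(i,Pj,k) - X_(i,j,Pk)) / 2, and
   theta is an explicit linear form in the first derivatives of A, B, C.  Both sides
   of the W1 condition are trilinear, so W1 amounts to 64 component identities.  The
   components (1,1,1) and (2,2,2) differ by 2B / ((A+C)^2 - 4B^2) > 0 times the two
   relations; conversely, once the relations are used to eliminate B_3 and B_4,
   all 64 identities hold. *)

Section Trilinear.
Variables (R : pzRingType) (n : nat).

Definition trilin (T : 'I_n -> 'I_n -> 'I_n -> R) (u v w : 'rV[R]_n) : R :=
  \sum_(i < n) \sum_(j < n) \sum_(k < n) u 0 i * v 0 j * w 0 k * T i j k.

Lemma sum_delta_mx (a : 'I_n) (G : 'I_n -> R) :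
  \sum_(i < n) (delta_mx 0 a : 'rV[R]_n) 0 i * G i = G a.
Proof.
rewrite (bigD1 a) //= mxE !eqxx mul1r big1 ?addr0 // => i /negbTE neq_ia.
by rewrite mxE neq_ia mul0r.
Qed.

Lemma trilinE T u v w : trilin T u v w =
  \sum_(i < n) u 0 i * \sum_(j < n) v 0 j * \sum_(k < n) w 0 k * T i j k.
Proof.
apply: eq_bigr => i _; rewrite mulr_sumr; apply: eq_bigr => j _.
by rewrite !mulr_sumr; apply: eq_bigr => k _; rewrite !mulrA.
Qed.

Lemma trilin_delta T a b c :
  trilin T (delta_mx 0 a) (delta_mx 0 b) (delta_mx 0 c) = T a b c.
Proof. by rewrite trilinE !sum_delta_mx. Qed.

Lemma eq_trilin S T :
  (forall u v w, trilin S u v w = trilin T u v w) <-> (forall i j k, S i j k = T i j k).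
Proof.
split=> [eqST i j k | eqST u v w]; first by rewrite -!trilin_delta eqST.
by apply: eq_bigr => i _; apply: eq_bigr => j _; apply: eq_bigr => k _; rewrite eqST.
Qed.
End Trilinear.

Lemma ord4_ind (P : 'I_4 -> Prop) : P i1 -> P i2 -> P i3 -> P i4 -> forall i, P i.
Proof.
move=> P1 P2 P3 P4 [[|[|[|[|k]]]] lt_k4] //;
  by rewrite (bool_irrelevance lt_k4 isT).
Qed.

Lemma sum_ord4 (V : nmodType) (F : 'I_4 -> V) :
  \sum_(i < 4) F i = F i1 + F i2 + F i3 + F i4.
Proof.
rewrite !big_ord_recr big_ord0 /= add0r.
by congr (F _ + F _ + F _ + F _); apply: val_inj.
Qed.

Definition shift2 (i : 'I_4) : 'I_4 :=
  match nat_of_ord i with 0 => i3 | 1 => i4 | 2 => i1 | _ => i2 end.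

Lemma shift2E : (shift2 i1 = i3) * (shift2 i2 = i4) * (shift2 i3 = i1) * (shift2 i4 = i2).
Proof. by []. Qed.

Lemma shift2K : involutive shift2.
Proof. by apply: ord4_ind. Qed.

Lemma shift2_inj : injective shift2.
Proof. exact: inv_inj shift2K. Qed.

Section Pmx.
Variable R : realType.

Lemma PmxE j a : Pmx R j a = (a == shift2 j)%:R.
Proof. by rewrite mxE; move: j a; do 2!apply: ord4_ind. Qed.

Lemma sum_Pmx_l j (G : 'I_4 -> R) : \sum_(a < 4) Pmx R j a * G a = G (shift2 j).
Proof.
rewrite (bigD1 (shift2 j)) //= PmxE eqxx mul1r big1 ?addr0 // => a /negbTE neq_a.
by rewrite PmxE neq_a mul0r.
Qed.

Lemma sum_Pmx_r l (G : 'I_4 -> R) : \sum_(k < 4) G k * Pmx R k l = G (shift2 l).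
Proof.
rewrite (bigD1 (shift2 l)) //= PmxE shift2K eqxx mulr1 big1 ?addr0 // => k neq_k.
rewrite PmxE mulr_natr; case: eqP => [def_l|]; last by rewrite mulr0n.
by move: neq_k; rewrite def_l shift2K eqxx.
Qed.

End Pmx.

Section Circulant.
Variable R : realType.

Definition circ4 (a b c : R) : 'M[R]_4 :=
  \matrix_(i, j) if i == j then a else if odd (i + j) then b else c.

(* [circ4 a b c] is the circulant matrix of (a, b, c, b); its eigenvalues
   a + c + 2b, a + c - 2b and a - c (twice) give the inverse below. *)
Definition circ4_den (a b c : R) : R := (a + c) ^+ 2 - 4 * b ^+ 2.
Definition invc_diag (a b c : R) : R := 2^-1 * ((a + c) / circ4_den a b c + (a - c)^-1).
Definition invc_even (a b c : R) : R := 2^-1 * ((a + c) / circ4_den a b c - (a - c)^-1).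
Definition invc_odd (a b c : R) : R := - b / circ4_den a b c.

Lemma circ4_mulV a b c : a - c != 0 -> circ4_den a b c != 0 ->
  circ4 a b c *m circ4 (invc_diag a b c) (invc_odd a b c) (invc_even a b c) = 1%:M.
Proof.
move=> nz_ac nz_den; apply/matrixP => i j; rewrite !mxE sum_ord4 !mxE.
move: nz_den; rewrite /invc_diag /invc_even /invc_odd /circ4_den => nz_den.
by move: i j; do 2!apply: ord4_ind; rewrite /=; field; rewrite nz_ac nz_den.
Qed.

End Circulant.

(* [field] is only fast once the values of the derivatives are opaque variables. *)
Ltac abstract_derivatives :=
  repeat match goal with |- context [pd ?i ?f ?y] => generalize (pd i f y); intro end.

Section Components.
Variables (R : realType) (A B C : 'rV[R]_4 -> R) (x : 'rV[R]_4).
Hypotheses (lt_CA : C x < A x) (lt_BC : B x < C x) (gt0_B : 0 < B x).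

Local Notation p := (invc_diag (A x) (B x) (C x)).
Local Notation q := (invc_odd (A x) (B x) (C x)).
Local Notation r := (invc_even (A x) (B x) (C x)).
Local Notation den := (circ4_den (A x) (B x) (C x)).

Lemma metric_gt0 : [/\ 0 < A x - C x, 0 < den & 0 < A x + C x].
Proof.
have -> : den = (A x + C x - 2 * B x) * (A x + C x + 2 * B x) by rewrite /circ4_den; ring.
(* [lra] ignores section hypotheses. *)
by move: lt_CA lt_BC gt0_B => *; split; [lra | apply: mulr_gt0; lra | lra].
Qed.

Lemma metric_neq0 : [/\ A x - C x != 0, den != 0 & A x + C x != 0].
Proof. by have [? ? ?] := metric_gt0; split; apply: lt0r_neq0. Qed.

Lemma gmx_circ4 : gmx A B C x = circ4 (A x) (B x) (C x).
Proof. by apply/matrixP => i j; rewrite !mxE /gc; case: (i == j) => //; case: (odd _). Qed.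

Lemma ginvE : ginv A B C x = circ4 p q r.
Proof.
have [nz_ac nz_den _] := metric_neq0; have gV := circ4_mulV nz_ac nz_den.
have [unit_g _] := mulmx1_unit gV.
by rewrite /ginv gmx_circ4 -[invmx _]mulmx1 -gV mulKmx.
Qed.

Lemma gmx_mulV : gmx A B C x *m ginv A B C x = 1%:M.
Proof. by have [nz_ac nz_den _] := metric_neq0; rewrite ginvE gmx_circ4 circ4_mulV. Qed.

Lemma gc_sym i j : gc A B C i j = gc A B C j i.
Proof. by rewrite /gc eq_sym addnC. Qed.

Lemma gc_shift2 i j : gc A B C (shift2 i) j = gc A B C i (shift2 j).
Proof. by move: i j; do 2!apply: ord4_ind. Qed.

Lemma pd_gc i m n : pd i (gc A B C m n) x = gc (pd i A) (pd i B) (pd i C) m n x.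
Proof. by rewrite /gc; case: (m == n) => //; case: (odd _). Qed.

(* Twice the Christoffel symbol of the first kind [Gamma_{n,im}]. *)
Definition Gam1 (i m n : 'I_4) : R :=
  pd i (gc A B C m n) x + pd m (gc A B C i n) x - pd n (gc A B C i m) x.

Lemma Gam1E i m n : Gam1 i m n = gc (pd i A) (pd i B) (pd i C) m n x
  + gc (pd m A) (pd m B) (pd m C) i n x - gc (pd n A) (pd n B) (pd n C) i m x.
Proof. by rewrite /Gam1 !pd_gc. Qed.

Lemma GamE k i j : Gam A B C x k i j = 2^-1 * \sum_(l < 4) ginv A B C x k l * Gam1 i j l.
Proof. by []. Qed.

Lemma lower_Gam k i m :
  \sum_(l < 4) gc A B C l k x * Gam A B C x l i m = 2^-1 * Gam1 i m k.
Proof.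
under eq_bigr => l _ do rewrite GamE mulrCA mulr_sumr.
rewrite -mulr_sumr exchange_big /=; congr (_ * _).
transitivity (\sum_(n < 4) (gmx A B C x *m ginv A B C x) k n * Gam1 i m n).
  apply: eq_bigr => n _; rewrite mxE mulr_suml; apply: eq_bigr => l _.
  by rewrite mxE gc_sym mulrA.
rewrite gmx_mulV (bigD1 k) //= big1 ?addr0 => [|n neq_nk]; rewrite !mxE.
  by rewrite eqxx mul1r.
by rewrite eq_sym (negbTE neq_nk) mul0r.
Qed.

Lemma nablaPE i j l :
  nablaP A B C x i j l = Gam A B C x l i (shift2 j) - Gam A B C x (shift2 l) i j.
Proof. by rewrite /nablaP sum_Pmx_l (sum_Pmx_r _ (fun k => Gam A B C x k i j)). Qed.

Lemma FcE i j k : Fc A B C x i j k = 2^-1 * (Gam1 i (shift2 j) k - Gam1 i j (shift2 k)).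
Proof.
rewrite /Fc; under eq_bigr => l _ do rewrite nablaPE mulrBl.
rewrite sumrB mulrBr -!lower_Gam; congr (_ - _).
  by apply: eq_bigr => l _; rewrite mulrC.
rewrite [LHS](reindex_inj shift2_inj); apply: eq_bigr => l _.
by rewrite shift2K gc_shift2 mulrC.
Qed.

Lemma thetacE k : thetac A B C x k =
  2 * (p * (pd (shift2 k) A x - pd k C x) + r * (pd (shift2 k) C x - pd k A x))
  + 4 * q * (pd (shift2 k) B x - pd k B x).
Proof.
rewrite /thetac ginvE.
under eq_bigr => i _ do under eq_bigr => j _ do rewrite FcE !Gam1E mxE.
rewrite !sum_ord4 /gc.
by move: k; apply: ord4_ind; rewrite /= ?shift2E; abstract_derivatives; field.
Qed.

Definition W1_rhs (i j k : 'I_4) : R :=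
  4^-1 * (gc A B C i j x * thetac A B C x k + gc A B C i k x * thetac A B C x j
          - gc A B C i (shift2 j) x * thetac A B C x (shift2 k)
          - gc A B C i (shift2 k) x * thetac A B C x (shift2 j)).

Lemma PvE (v : 'rV[R]_4) : Pv v = \row_j v 0 (shift2 j).
Proof. by apply/rowP => j; rewrite !mxE sum_Pmx_r. Qed.

Lemma W1_rhsE u v w :
  4^-1 * (gv A B C x u v * thetav A B C x w + gv A B C x u w * thetav A B C x v
          - gv A B C x u (Pv v) * thetav A B C x (Pv w)
          - gv A B C x u (Pv w) * thetav A B C x (Pv v))
  = trilin W1_rhs u v w.
Proof.
rewrite /W1_rhs /trilin /gv /thetav !PvE; move: (thetac A B C x) => th.
by rewrite !sum_ord4 !mxE /gc /= ?shift2E; field.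
Qed.

Definition W1_defect (i j : 'I_4) : R :=
  (A x + C x) * (pd j B x - pd i B x) - B x * (pd j A x - pd i C x + pd j C x - pd i A x).

Lemma Fc_sub_W1_rhs_diag i :
  Fc A B C x i i i - W1_rhs i i i = 2 * B x / den * W1_defect i (shift2 i).
Proof.
have [nz_ac nz_den _] := metric_neq0; move: nz_ac nz_den.
rewrite /W1_rhs !thetacE FcE !Gam1E /gc /W1_defect.
rewrite /invc_diag /invc_odd /invc_even /circ4_den => nz_ac nz_den.
move: i; apply: ord4_ind; rewrite /= ?shift2E; abstract_derivatives;
  field; by rewrite nz_ac nz_den.
Qed.

Lemma W1_defect_eq0 i j : W1_defect i j = 0 <->
  (A x + C x) * (pd j B x - pd i B x) = B x * (pd j A x - pd i C x + pd j C x - pd i A x).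
Proof. by split=> [/subr0_eq | eq_ab]; last by apply/eqP; rewrite subr_eq0; apply/eqP. Qed.

Lemma Fc_eq_W1_rhs_of_defect : W1_defect i2 i4 = 0 -> W1_defect i1 i3 = 0 ->
  forall i j k, Fc A B C x i j k = W1_rhs i j k.
Proof.
have [nz_ac nz_den nz_apc] := metric_neq0.
move=> /W1_defect_eq0 rel24 /W1_defect_eq0 rel13.
have B4E : pd i4 B x =
    pd i2 B x + B x * (pd i4 A x - pd i2 C x + pd i4 C x - pd i2 A x) / (A x + C x).
  by rewrite -rel24; field.
have B3E : pd i3 B x =
    pd i1 B x + B x * (pd i3 A x - pd i1 C x + pd i3 C x - pd i1 A x) / (A x + C x).
  by rewrite -rel13; field.
move: nz_den; rewrite /invc_diag /invc_odd /invc_even /circ4_den => nz_den i j k.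
rewrite FcE /W1_rhs !thetacE !Gam1E /gc /invc_diag /invc_odd /invc_even /circ4_den.
move: i j k; do 3!apply: ord4_ind; rewrite /= ?shift2E ?B4E ?B3E; abstract_derivatives;
  field; by rewrite nz_ac nz_den nz_apc.
Qed.

Lemma Fc_eq_W1_rhs : (forall i j k, Fc A B C x i j k = W1_rhs i j k) <->
  W1_defect i2 i4 = 0 /\ W1_defect i1 i3 = 0.
Proof.
split=> [eqFW | [] ]; last exact: Fc_eq_W1_rhs_of_defect.
have [_ gt0_den _] := metric_gt0.
have nz_factor : 2 * B x / den != 0 by rewrite lt0r_neq0 // divr_gt0 // mulr_gt0.
have defect0 i : W1_defect i (shift2 i) = 0.
  move: (Fc_sub_W1_rhs_diag i); rewrite eqFW subrr => /esym/eqP.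
  by rewrite mulf_eq0 (negbTE nz_factor) => /eqP.
by split; [exact: defect0 i2 | exact: defect0 i1].
Qed.

End Components.

Lemma W1_components (R : realType) (U : set 'rV[R]_4) (A B C : 'rV[R]_4 -> R) :
  W1 U A B C <-> forall x, U x -> forall i j k, Fc A B C x i j k = W1_rhs A B C x i j k.
Proof.
split=> W1ABC x Ux.
  by apply/eq_trilin => u v w; rewrite -W1_rhsE; exact: W1ABC.
by move: (W1ABC x Ux) => /eq_trilin eqFW u v w; rewrite W1_rhsE; exact: eqFW.
Qed.

(* The class condition is pointwise and algebraic in the first derivatives of
   A, B, C. *)
Theorem theorem3p5 (R : realType) (U : set 'rV[R]_4) (A B C : 'rV[R]_4 -> R) :
  open U ->
  smooth_on U A -> smooth_on U B -> smooth_on U C ->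
  (forall x, U x -> [/\ C x < A x, B x < C x & 0 < B x]) ->
  (W1 U A B C <->
   (forall x, U x ->
      (A x + C x) * (pd i4 B x - pd i2 B x)
        = B x * (pd i4 A x - pd i2 C x + pd i4 C x - pd i2 A x)
   /\ (A x + C x) * (pd i3 B x - pd i1 B x)
        = B x * (pd i3 A x - pd i1 C x + pd i3 C x - pd i1 A x))).
Proof.
move=> _ _ _ _ metric_ineqs; rewrite W1_components.
split=> H x Ux; have [lt_CA lt_BC gt0_B] := metric_ineqs x Ux.
  by have /(Fc_eq_W1_rhs lt_CA lt_BC gt0_B)[/W1_defect_eq0 ? /W1_defect_eq0 ?] := H x Ux.
by apply/(Fc_eq_W1_rhs lt_CA lt_BC gt0_B); have [/W1_defect_eq0 ? /W1_defect_eq0 ?] := H x Ux.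
Qed.
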